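(* For a loss $\rho$ and prior $\pi$ on $\mathbb R$ such that the M-posterior has finite variance, for every $\tau\in(0,1)$, $\varepsilon^*(T_\tau,X^n)\ge\varepsilon^*_{W_2}(\pi_n^\rho,X^n)$.
   Context: Location M-posterior: for $Y=(y_1,\dots,y_n)\in\mathbb R^n$, $\pi_n^\rho(\theta\mid Y)\propto\pi(\theta)\exp(-\sum_i\rho(y_i-\theta))$; posterior left $\tau$-quantile $T_\tau(Y)=\inf\{\theta:\int_{-\infty}^\theta\pi_n^\rho(\theta'\mid Y)d\theta'\ge\tau\}$. $\mathcal B(X^n,m)$: samples differing from $X^n$ in at most $m$ entries. Posterior breakdown point $\varepsilon^*_{W_2}(\pi_n^\rho,X^n)=\min\{m/n:\sup_{Y\in\mathcal B(X^n,m)}W_2(\pi_n^\rho(\cdot\mid Y),\pi_n^\rho(\cdot\mid X^n))=\infty\}$ ($W_2$ the 2-Wasserstein distance). Finite-sample breakdown point of a statistic $T$: $\varepsilon^*(T,X^n)=\min\{m/n:\sup_{Y\in\mathcal B(X^n,m)}|T(Y)-T(X^n)|=\infty\}$. *)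

From HB Require Import structures.
From mathcomp Require Import all_boot all_order all_algebra.
From mathcomp Require Import all_classical all_reals all_analysis.
Set Implicit Arguments. Unset Strict Implicit. Unset Printing Implicit Defensive.
Import Order.TTheory GRing.Theory Num.Theory.
Import numFieldNormedType.Exports.
Local Open Scope classical_set_scope.
Local Open Scope ring_scope.

Definition neg_loglik (R : realType) (rho : R -> R) (n : nat) (Y : 'I_n -> R)
  (t : R) : R := \sum_(i < n) rho (Y i - t).

Definition unnorm_post (R : realType) (pi rho : R -> R) (n : nat)
  (Y : 'I_n -> R) (t : R) : R := pi t * expR (- neg_loglik rho Y t).

Definition post_norm (R : realType) (pi rho : R -> R) (n : nat)
  (Y : 'I_n -> R) : \bar R :=
  (\int[@lebesgue_measure R]_(t in [set: R]) (unnorm_post pi rho Y t)%:E)%E.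

Definition post_dens (R : realType) (pi rho : R -> R) (n : nat)
  (Y : 'I_n -> R) (t : R) : R := unnorm_post pi rho Y t / fine (post_norm pi rho Y).

Definition posterior (R : realType) (pi rho : R -> R) (n : nat)
  (Y : 'I_n -> R) : set R -> \bar R :=
  fun A => (\int[@lebesgue_measure R]_(t in A) (post_dens pi rho Y t)%:E)%E.

Definition post_quantile (R : realType) (pi rho : R -> R) (n : nat) (tau : R)
  (Y : 'I_n -> R) : R :=
  inf [set t : R | (tau%:E <= posterior pi rho Y `]-oo, t])%E].

Definition W2sq (R : realType) (mu nu : set R -> \bar R) : \bar R :=
  ereal_inf [set x : \bar R | exists g : probability (R * R)%type R,
    (forall A : set R, measurable A ->
        g (A `*` [set: R]) = mu A /\ g ([set: R] `*` A) = nu A) /\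
    x = (\int[g]_(z in [set: R * R]) ((z.1 - z.2) ^+ 2)%:E)%E].

Definition W2 (R : realType) (mu nu : set R -> \bar R) : \bar R :=
  match W2sq mu nu with
  | EFin r => (Num.sqrt r)%:E
  | x => x
  end.

Definition Bset (R : realType) (n : nat) (X : 'I_n -> R) (m : nat) :
  set ('I_n -> R) :=
  [set Y : 'I_n -> R | (#|[pred i | Y i != X i]| <= m)%N].

(* min { m/n : sup_{Y in B(X,m)} D(Y, X) = +oo }  (min of empty set = +oo) *)
Definition breakdown (R : realType) (n : nat) (X : 'I_n -> R)
  (D : ('I_n -> R) -> \bar R) : \bar R :=
  ereal_inf [set (m%:R / n%:R : R)%:E | m in
     [set m : nat | ereal_sup [set D Y | Y in Bset X m] = +oo%E]].

Definition fs_breakdown (R : realType) (n : nat) (T : ('I_n -> R) -> R)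
  (X : 'I_n -> R) : \bar R :=
  breakdown X (fun Y => (`|T Y - T X|)%:E).

Definition post_breakdown (R : realType) (pi rho : R -> R) (n : nat)
  (X : 'I_n -> R) : \bar R :=
  breakdown X (fun Y => W2 (posterior pi rho Y) (posterior pi rho X)).

(* Fix d > 0 with 2 d <= min(tau, 1 - tau).  The posterior at X has a finite
   second moment, so by Chebyshev it puts mass at most d outside some [-a, a].
   Let q be the tau-quantile of another posterior, with |q| > a.  If q > a, a
   coupling of the two posteriors gives mass < tau to {x <= (a + q) / 2} and at
   most d to {|y| > a}, hence at least d to {x > (a + q) / 2, |y| <= a}; if
   q < -a, some b < (q - a) / 2 has mass >= tau and the coupling gives at least
   d to {x <= b, |y| <= a}.  Either way mass d moves by at least (|q| - a) / 2,
   so W2 >= sqrt d (|q| - a) / 2: contaminations that send the quantile to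
   infinity also send the W2 distance to infinity. *)

From HB Require Import structures.
From mathcomp Require Import all_boot all_order all_algebra.
From mathcomp Require Import all_classical all_reals all_analysis.
From mathcomp Require Import measurable_realfun lra.
Import Order.TTheory GRing.Theory Num.Theory.
Import numFieldNormedType.Exports.
Local Open Scope classical_set_scope.
Local Open Scope ring_scope.

Section Posterior.
Context {R : realType}.
Local Notation leb := (@lebesgue_measure R).

Lemma integral_out_itv_le_second_moment (f : R -> R) (a : R) :
  0 < a -> measurable_fun [set: R] f -> (forall t, 0 <= f t) ->
  (\int[leb]_(t in ~` `[(- a)%R, a]) (f t)%:E <=
   ((a ^+ 2)^-1)%:E * \int[leb]_(t in [set: R]) (t ^+ 2 * f t)%:E)%E.
Proof.
move=> a0 mf f0.
have mout : measurable (~` `[(- a)%R, a] : set R).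
  by apply: measurableC; exact: measurable_itv.
have mm : measurable_fun [set: R] (fun t => t ^+ 2 * f t).
  by apply: measurable_funM => //; exact: exprn_measurable.
have m0 t : 0 <= t ^+ 2 * f t by rewrite mulr_ge0 ?sqr_ge0.
rewrite -ge0_integralZl //; last 3 first.
- exact/measurable_EFinP/measurable_funTS.
- by move=> t _; rewrite lee_fin.
- by rewrite lee_fin invr_ge0 exprn_ge0 ?(ltW a0).
apply: (@le_trans _ _
  (\int[leb]_(t in ~` `[(- a)%R, a]) ((a ^+ 2)^-1 * (t ^+ 2 * f t))%:E)%E).
  apply: ge0_le_integral => //.
  - by move=> t _; rewrite lee_fin.
  - exact/measurable_EFinP/measurable_funTS.
  - exact/measurable_EFinP/measurable_funM/measurable_funTS.
  move=> t /= tout; rewrite lee_fin mulrA ler_peMl // mulrC.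
  rewrite ler_pdivlMr ?exprn_gt0 // mul1r.
  have /negP : ~ (- a <= t <= a) by move=> ta; apply: tout; rewrite /= in_itv.
  by rewrite negb_and -!ltNge => /orP[] ?; nra.
apply: ge0_subset_integral => //.
- exact/measurable_EFinP/measurable_funM.
- by move=> t _; rewrite lee_fin mulr_ge0 // invr_ge0 exprn_ge0 ?(ltW a0).
Qed.

Context {prior loss : R -> R} {n : nat} (prior_ge0 : forall t, 0 <= prior t).
Context (mprior : measurable_fun [set: R] prior) (mloss : measurable_fun [set: R] loss).

Lemma post_dens_ge0 (Y : 'I_n -> R) :
  (0 < post_norm prior loss Y)%E -> forall t, 0 <= post_dens prior loss Y t.
Proof.
move=> norm_gt0 t; rewrite /post_dens /unnorm_post.
by rewrite divr_ge0 ?mulr_ge0 ?expR_ge0 // fine_ge0 ?(ltW norm_gt0).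
Qed.

Lemma measurable_post_dens (Y : 'I_n -> R) :
  measurable_fun [set: R] (post_dens prior loss Y).
Proof.
apply/measurable_funM/measurable_cst/measurable_funM => //.
apply/measurableT_comp/measurableT_comp;
  [exact: measurable_expR | exact: oppr_measurable |].
apply: measurable_sum => i; apply: measurableT_comp => //.
exact/measurable_funB/measurable_id/measurable_cst.
Qed.

Lemma posterior_tail_small {Y : 'I_n -> R} {d : R} :
  (0 < post_norm prior loss Y)%E ->
  (\int[leb]_(t in [set: R]) (t ^+ 2 * post_dens prior loss Y t)%:E < +oo)%E ->
  0 < d -> exists2 a, 0 < a & (posterior prior loss Y (~` `[(- a)%R, a]) <= d%:E)%E.
Proof.
move=> norm_gt0 moment_fin d0.
set m2 := (\int[leb]_(t in _) _)%E in moment_fin.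
have m2_ge0 : (0 <= m2)%E.
  by apply: integral_ge0 => t _; rewrite lee_fin mulr_ge0 ?sqr_ge0 ?post_dens_ge0.
have [M m2E] : exists M, m2 = M%:E.
  by exists (fine m2); rewrite fineK // ge0_fin_numE.
have M0 : 0 <= M by rewrite -lee_fin -m2E.
set a := 1 + M / d.
have a1 : 1 <= a by rewrite lerDl divr_ge0 ?(ltW d0).
have a0 : 0 < a by lra.
have Mda : M <= d * a.
  by rewrite mulrDr mulr1 mulrCA mulfV ?gt_eqF // mulr1 lerDr (ltW d0).
exists a => //; rewrite /posterior.
apply: le_trans (integral_out_itv_le_second_moment _ _ a0
  (measurable_post_dens Y) (post_dens_ge0 Y norm_gt0)) _.
rewrite -/m2 m2E -EFinM lee_fin mulrC ler_pdivrMr ?exprn_gt0 //.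
have da_ge0 : 0 <= d * a by rewrite mulr_ge0 //; lra.
by rewrite (le_trans Mda) // expr2 mulrA ler_peMr.
Qed.

End Posterior.

Section Wasserstein.
Context {R : realType}.

Definition quantile (mu : set R -> \bar R) (tau : R) : R :=
  inf [set t : R | (tau%:E <= mu [set` `]-oo, t]])%E].

Definition coupling (mu nu : set R -> \bar R) (g : probability (R * R)%type R) :=
  forall A : set R, measurable A ->
    g (A `*` [set: R]) = mu A /\ g ([set: R] `*` A) = nu A.

Definition transport_cost (g : probability (R * R)%type R) : \bar R :=
  (\int[g]_(z in [set: R * R]) ((z.1 - z.2) ^+ 2)%:E)%E.

Lemma finite_measure_EFin {dT} {T : measurableType dT}
    (m : {finite_measure set T -> \bar R}) {E : set T} :
  measurable E -> exists r : R, m E = r%:E.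
Proof. by move=> mE; exists (fine (m E)); rewrite fineK // fin_num_measure. Qed.

Lemma le_measure_cover2 {dT} {T : measurableType dT} (m : {measure set T -> \bar R})
    (C C1 C2 : set T) :
  measurable C -> measurable C1 -> measurable C2 -> C `<=` C1 `|` C2 ->
  (m C <= m C1 + m C2)%E.
Proof.
move=> mC mC1 mC2 sC; apply: le_trans (measureU2 _ mC1 mC2).
by apply: le_measure => //; rewrite inE //; exact: measurableU.
Qed.

Lemma transport_cost_ge (g : probability (R * R)%type R) {D : set (R * R)} {k : R} :
  measurable D -> 0 <= k -> (forall z, D z -> k <= (z.1 - z.2) ^+ 2) ->
  (k%:E * g D <= transport_cost g)%E.
Proof.
move=> mD k0 Dk.
have mcost : measurable_fun [set: R * R] (fun z : R * R => ((z.1 - z.2) ^+ 2)%:E).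
  apply/measurable_EFinP/(measurableT_comp (exprn_measurable 2)).
  by apply: measurable_funB; [exact: measurable_fst | exact: measurable_snd].
rewrite /transport_cost -(integral_cst g mD).
apply: (@le_trans _ _ (\int[g]_(z in D) ((z.1 - z.2) ^+ 2)%:E)%E).
  by apply: ge0_le_integral => //; exact: measurable_funTS.
by apply: ge0_subset_integral => // z _; rewrite lee_fin sqr_ge0.
Qed.

Section quantile_coupling.
Context {mu nu : set R -> \bar R} {g : probability (R * R)%type R}.
Context (g_coupling : coupling mu nu g) {tau a d : R}.
Context (nu_tail : (nu (~` `[(- a)%R, a]) <= d%:E)%E).

Let mB : measurable (`[(- a)%R, a] : set R). Proof. exact: measurable_itv. Qed.
Let mBc : measurable (~` `[(- a)%R, a] : set R). Proof. exact: measurableC. Qed.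
Let mA b : measurable ([set` `]-oo, b]] : set R). Proof. exact: measurable_itv. Qed.

Lemma transport_cost_ge_upper b : a <= b -> 2 * d <= 1 - tau ->
  (mu [set` `]-oo, b]] < tau%:E)%E -> ((d * (b - a) ^+ 2)%:E <= transport_cost g)%E.
Proof.
move=> ab dtau mu_b.
set D := (~` [set` `]-oo, b]]) `*` `[(- a)%R, a].
have mAc : measurable (~` [set` `]-oo, b]]) by exact: measurableC.
have mD : measurable D by exact: measurableX.
have [u gu] := finite_measure_EFin g (measurableX measurableT mBc).
have [s gs] := finite_measure_EFin g (measurableX (mA b) measurableT).
have [s' gs'] := finite_measure_EFin g (measurableX mAc measurableT).
have [r gr] := finite_measure_EFin g mD.
have : (g [set: R * R] <=
        g ([set` `]-oo, b]] `*` [set: R]) + g (~` [set` `]-oo, b]] `*` [set: R]))%E.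
  apply: le_measure_cover2 => //; try exact: measurableX.
  by move=> [x y] _ /=; have [|] := boolP (x \in `]-oo, b]); [left | right].
have : (g (~` [set` `]-oo, b]] `*` [set: R]) <=
        g D + g ([set: R] `*` ~` `[(- a)%R, a]))%E.
  apply: le_measure_cover2 => //; try exact: measurableX.
  by move=> [x y] [/= xb _]; have [|] := boolP (y \in `[(- a)%R, a]); [left | right].
rewrite probability_setT gs gs' gr gu -!EFinD !lee_fin => cover_Ac cover_T.
move: nu_tail mu_b; rewrite -(g_coupling _ mBc).2 -(g_coupling _ (mA b)).1 gu gs.
rewrite lte_fin lee_fin => ud sb.
have Dcost z : D z -> (b - a) ^+ 2 <= (z.1 - z.2) ^+ 2.
  case: z => x y [/= /negP]; rewrite !in_itv /= -ltNge => bx /andP[ay ya].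
  by rewrite ler_sqr ?nnegrE; lra.
apply: le_trans _ (transport_cost_ge g mD (sqr_ge0 _) Dcost).
by rewrite gr -EFinM lee_fin mulrC ler_wpM2l ?sqr_ge0 //; lra.
Qed.

Lemma transport_cost_ge_lower b : b <= - a -> 2 * d <= tau ->
  (tau%:E <= mu [set` `]-oo, b]])%E -> ((d * (- a - b) ^+ 2)%:E <= transport_cost g)%E.
Proof.
move=> ba dtau mu_b.
set D := [set` `]-oo, b]] `*` `[(- a)%R, a].
have mD : measurable D by exact: measurableX.
have [u gu] := finite_measure_EFin g (measurableX measurableT mBc).
have [s gs] := finite_measure_EFin g (measurableX (mA b) measurableT).
have [r gr] := finite_measure_EFin g mD.
have : (g ([set` `]-oo, b]] `*` [set: R]) <= g D + g ([set: R] `*` ~` `[(- a)%R, a]))%E.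
  apply: le_measure_cover2 => //; try exact: measurableX.
  by move=> [x y] [/= xb _]; have [|] := boolP (y \in `[(- a)%R, a]); [left | right].
rewrite gs gr gu -EFinD lee_fin => cover_A.
move: nu_tail mu_b; rewrite -(g_coupling _ mBc).2 -(g_coupling _ (mA b)).1 gu gs.
rewrite !lee_fin => ud taus.
have Dcost z : D z -> (- a - b) ^+ 2 <= (z.1 - z.2) ^+ 2.
  case: z => x y [/=]; rewrite !in_itv /= => xb /andP[ay ya].
  by rewrite -[(x - y) ^+ 2]sqrrN ler_sqr ?nnegrE; lra.
apply: le_trans _ (transport_cost_ge g mD (sqr_ge0 _) Dcost).
by rewrite gr -EFinM lee_fin mulrC ler_wpM2l ?sqr_ge0 //; lra.
Qed.

End quantile_coupling.

Lemma W2sq_ge_quantile (mu nu : set R -> \bar R) (tau a d : R) :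
  0 < d -> 2 * d <= tau -> 2 * d <= 1 - tau -> 0 < a ->
  (nu (~` `[(- a)%R, a]) <= d%:E)%E -> a < `|quantile mu tau| ->
  ((d * ((`|quantile mu tau| - a) / 2) ^+ 2)%:E <= W2sq mu nu)%E.
Proof.
move=> d0 dtau dtau' a0 nu_tail.
rewrite /quantile; set S := [set t | _].
have [Sinf|/inf_out->] := pselect (has_inf S); last first.
  by rewrite normr0 => ?; exfalso; lra.
move=> a_lt_q; apply: le_ereal_inf_tmp => _ [g [g_coupling ->]].
move: a_lt_q; rewrite ltr_normr => /orP[a_lt_q|a_lt_Nq].
- have -> : `|inf S| = inf S by rewrite gtr0_norm //; lra.
  have mu_b : (mu [set` `]-oo, ((a + inf S) / 2)%R]] < tau%:E)%E.
    by rewrite ltNge; apply/negP => /(ge_inf Sinf.2); lra.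
  have -> : (inf S - a) / 2 = (a + inf S) / 2 - a by lra.
  have ab : a <= (a + inf S) / 2 by lra.
  exact: (transport_cost_ge_upper g_coupling nu_tail _ ab dtau' mu_b).
- have -> : `|inf S| = - inf S by rewrite ltr0_norm //; lra.
  have [b Sb b_lt] : exists2 b, S b & b < (inf S - a) / 2.
    by apply: inf_lt; [exact: Sinf.1 | lra].
  have ba : b <= - a by lra.
  apply: le_trans _ (transport_cost_ge_lower g_coupling nu_tail _ ba dtau Sb).
  by rewrite lee_fin ler_pM2l // ler_sqr ?nnegrE; lra.
Qed.

Lemma W2_ge (mu nu : set R -> \bar R) (k : R) : 0 <= k ->
  ((k ^+ 2)%:E <= W2sq mu nu)%E -> (k%:E <= W2 mu nu)%E.
Proof.
rewrite /W2 => k0; case: (W2sq mu nu) => [r | | ] //=; rewrite ?leey ?leeNy_eq //.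
rewrite !lee_fin => kr; rewrite -(ger0_norm k0) -sqrtr_sqr ler_sqrt //.
exact: le_trans (sqr_ge0 k) kr.
Qed.

Lemma W2_ge_quantile (mu : set R -> \bar R) {nu : set R -> \bar R} {tau a d : R} :
  0 < d -> 2 * d <= tau -> 2 * d <= 1 - tau -> 0 < a ->
  (nu (~` `[(- a)%R, a]) <= d%:E)%E -> a < `|quantile mu tau| ->
  ((Num.sqrt d * ((`|quantile mu tau| - a) / 2))%:E <= W2 mu nu)%E.
Proof.
move=> d0 dtau dtau' a0 nu_tail a_lt_q; apply: W2_ge.
  by rewrite mulr_ge0 ?sqrtr_ge0 //; lra.
by rewrite exprMn (sqr_sqrtr (ltW d0)); exact: W2sq_ge_quantile.
Qed.

Lemma breakdown_le n (X : 'I_n -> R) (D D' : ('I_n -> R) -> \bar R) :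
  (forall M : R, exists K : R, forall Y, (K%:E < D' Y)%E -> (M%:E < D Y)%E) ->
  (breakdown X D <= breakdown X D')%E.
Proof.
move=> D_dominates; apply: ereal_inf_le_tmp => _ [m D'_unbounded <-].
exists m => //=; apply: eq_infty => M; have [K KM] := D_dominates M.
have /ereal_sup_gt[_ [Y BY <-] KY] : (K%:E < ereal_sup [set D' Y | Y in Bset X m])%E.
  by rewrite D'_unbounded ltry.
by apply/ltW/(lt_le_trans (KM _ KY))/ereal_sup_ubound; exists Y.
Qed.

End Wasserstein.

Theorem mainTheorem16 (R : realType) (pi rho : R -> R) (n : nat)
  (X : 'I_n -> R) (tau : R) :
  (0 < n)%N ->
  measurable_fun [set: R] pi ->
  (forall t, 0 <= pi t) ->
  (\int[@lebesgue_measure R]_(t in [set: R]) (pi t)%:E)%E = 1%E ->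
  measurable_fun [set: R] rho ->
  (forall Y : 'I_n -> R,
     (0 < post_norm pi rho Y)%E /\ (post_norm pi rho Y < +oo)%E /\
     (\int[@lebesgue_measure R]_(t in [set: R])
         ((t ^+ 2 * post_dens pi rho Y t)%:E) < +oo)%E) ->
  0 < tau < 1 ->
  (post_breakdown pi rho X <= fs_breakdown (post_quantile pi rho tau) X)%E.
Proof.
move=> _ mpi pi_ge0 _ mrho post_ok /andP[tau_gt0 tau_lt1].
have [d [d0 [dtau dtau']]] : exists d : R, 0 < d /\ 2 * d <= tau /\ 2 * d <= 1 - tau.
  by case: (leP tau (1 - tau)) => ?; [exists (tau / 2) | exists ((1 - tau) / 2)]; lra.
have [normX_gt0 [_ momentX]] := post_ok X.
have [a a0 tailX] := posterior_tail_small pi_ge0 mpi mrho normX_gt0 momentX d0.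
set q := post_quantile pi rho tau.
have sqrtd_gt0 : 0 < Num.sqrt d by rewrite sqrtr_gt0.
apply: breakdown_le => M; set e := `|M| / Num.sqrt d.
have e_ge0 : 0 <= e by rewrite divr_ge0 ?normr_ge0 ?(ltW sqrtd_gt0).
have sqrtd_e : Num.sqrt d * e = `|M| by rewrite mulrC divfK ?gt_eqF.
exists (`|q X| + a + 2 * e) => Y; rewrite lte_fin => qY_far.
have [a_lt_qY e_lt] : a < `|q Y| /\ e < (`|q Y| - a) / 2.
  by move: qY_far (ler_normB (q Y) (q X)); move: (q X) (q Y) => x y; split; lra.
apply: lt_le_trans (W2_ge_quantile (posterior pi rho Y) d0 dtau dtau' a0 tailX a_lt_qY).
by rewrite lte_fin (le_lt_trans (ler_norm M)) // -sqrtd_e ltr_pM2l.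
Qed.
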